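(* Let $D_{-}F(z)=F(z)-F(z-1)$, applied coefficientwise. Then \[ D_{-}H_B(z)=-\sum_{k=0}^{\infty}Y_{-k}(z-1)^k\,H_B(z), \] equivalently $H_B(z+1)-H_B(z)=-\sum_{k\ge0}Y_{-k}z^kH_B(z+1)$.
   Context: Normalized multiple Bernoulli polynomials: for integers $k\ge0$, $\zeta(-k|z)=-\frac{B_{k+1}(z)}{k+1}$ ($B_n(z)$ the Bernoulli polynomials, $B_n=B_n(0)$), and for $r\ge2$, $k_j\ge0$, $\zeta(-k_1,\ldots,-k_r|z)=-\frac{1}{k_r+1}\zeta(-k_1,\ldots,-k_{r-2},-k_{r-1}-k_r-1|z)-\frac12\zeta(-k_1,\ldots,-k_{r-2},-k_{r-1}-k_r|z)+\sum_{q=1}^{k_r}(-k_r)_q\frac{B_{q+1}}{(q+1)!}\zeta(-k_1,\ldots,-k_{r-2},-k_{r-1}-k_r+q|z)$, with $(a)_q=a(a+1)\cdots(a+q-1)$; the depth-zero (empty tuple) value is $1$. Let $\{Y_{-n}\}_{n\ge0}$ be non-commuting formal variables and \[ H_B(z)=\sum\zeta(-n_1,\ldots,-n_r|z)\,Y_{-n_1}\cdots Y_{-n_r}, \] the sum over all tuples (including the empty tuple, $r=0$) of non-positive integers. *)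

From mathcomp Require Import all_boot all_order all_algebra.
Set Implicit Arguments. Unset Strict Implicit. Unset Printing Implicit Defensive.
Import Order.TTheory GRing.Theory Num.Theory.
Local Open Scope ring_scope.

Section Defs.
Variable R : numFieldType.

(* Bernoulli numbers B_0, ..., B_n (convention B_1 = -1/2), via
   B_0 = 1 and B_m = -1/(m+1) * sum_{k<m} C(m+1,k) B_k. *)
Fixpoint bern_list (n : nat) : seq R :=
  match n with
  | 0 => [:: 1]
  | n'.+1 => let l := bern_list n' in
      rcons l (- (n'.+2%:R)^-1 *
               \sum_(k < n'.+1) ('C(n'.+2, k))%:R * nth 0 l k)
  end.

Definition bern (n : nat) : R := nth 0 (bern_list n) n.

Definition bernpoly (n : nat) (z : R) : R :=
  \sum_(k < n.+1) ('C(n, k))%:R * bern k * z ^+ (n - k).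

Definition poch (a : R) (q : nat) : R := \prod_(i < q) (a + i%:R).

(* zetaR fuel rs z : rs is the REVERSED tuple (k_r :: k_{r-1} :: ... :: k_1),
   representing zeta(-k_1,...,-k_r | z); fuel = depth. *)
Fixpoint zetaR (n : nat) (rs : seq nat) (z : R) : R :=
  match n with
  | 0 => 1
  | n'.+1 =>
    match rs with
    | [::] => 1
    | [:: k] => - bernpoly k.+1 z / k.+1%:R
    | kr :: kr1 :: rest =>
        - (kr.+1%:R)^-1 * zetaR n' ((kr1 + kr).+1 :: rest) z
        - 2%:R^-1 * zetaR n' ((kr1 + kr) :: rest) z
        + \sum_(1 <= q < kr.+1)
            poch (- kr%:R) q * bern q.+1 / (q.+1)`!%:R
              * zetaR n' ((kr1 + kr - q)%N :: rest) z
    end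
  end.

Definition zeta (s : seq nat) (z : R) : R := zetaR (size s) (rev s) z.

(* Formal non-commutative power series in the letters Y_{-n} (n : nat):
   coefficient function on words; the word [:: n_1; ...; n_r] stands for
   Y_{-n_1} ... Y_{-n_r}. *)
Definition ncseries := seq nat -> R.

Definition ncmul (F G : ncseries) : ncseries :=
  fun w => \sum_(i < (size w).+1) F (take i w) * G (drop i w).

Definition Ylin (c : nat -> R) : ncseries :=
  fun w => if w is [:: k] then c k else 0.

Definition HB (z : R) : ncseries := fun w => zeta w z.

Definition Dminus (F : R -> ncseries) (z : R) : ncseries :=
  fun w => F z w - F (z - 1) w.

End Defs.

From mathcomp Require Import all_boot all_order all_algebra.
From mathcomp Require Import ring zify.
Import GRing.Theory Num.Theory.
Local Open Scope ring_scope.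

(* Since D_- acts coefficientwise, the claim is the difference equation
   zeta(-k_1,...,-k_r | x+1) - zeta(-k_1,...,-k_r | x)
     = - x^k_1 zeta(-k_2,...,-k_r | x+1).
   The recursion defining zeta only touches the last two indices and is linear
   in the values of depth r-1, so for r >= 3 the equation follows by induction
   on r.  For r = 1 it is B_n(x+1) - B_n(x) = n x^(n-1).  For r = 2 the
   recursion, applied to the depth-one differences -x^m, reassembles
   B_(k_2+1)(x+1) / (k_2+1) term by term; this uses that B_n vanishes for odd
   n > 1, which follows from the same difference equation at x = -1. *)

Lemma bin_fact3 n j l : (j + l <= n)%N ->
  ('C(n, j) * 'C(n - j, l) * (j`! * l`! * (n - j - l)`!))%N = n`!.
Proof.
move=> le_jl_n.
have le_jn : (j <= n)%N by apply: leq_trans le_jl_n; rewrite leq_addr.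
have le_l_nj : (l <= n - j)%N by rewrite leq_subRL // addnC.
transitivity ('C(n, j) * j`! * ('C(n - j, l) * (l`! * (n - j - l)`!)))%N.
  by ring.
by rewrite bin_fact // -mulnA bin_fact.
Qed.

Lemma bin_mul_sub n k i : ('C(n, k) * 'C(n - k, i) = 'C(n, i) * 'C(n - i, k))%N.
Proof.
have vanish j l : (n < j + l)%N -> ('C(n, j) * 'C(n - j, l) = 0)%N.
  move=> lt_n_jl; case: (leqP j n) => le_jn; last by rewrite bin_small.
  by rewrite (@bin_small (n - j)) ?muln0 //; lia.
case: (leqP (k + i) n) => le_ki_n; last by rewrite !vanish // addnC.
have facts_gt0 : (0 < k`! * i`! * (n - k - i)`!)%N by rewrite !muln_gt0 !fact_gt0.
apply/eqP; rewrite -(eqn_pmul2r facts_gt0) bin_fact3 //.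
by rewrite [(k`! * _)%N]mulnC subnAC bin_fact3 // addnC.
Qed.

Section Bernoulli.
Variable R : numFieldType.
Local Notation B := (@bern R).

Lemma size_bern_list n : size (bern_list R n) = n.+1.
Proof. by elim: n => [|n IH] //=; rewrite size_rcons IH. Qed.

Lemma nth_bern_list n k : (k <= n)%N -> nth 0 (bern_list R n) k = B k.
Proof.
elim: n k => [|n IH] k; first by rewrite leqn0 => /eqP ->.
rewrite leq_eqVlt => /orP [/eqP -> //|lt_kn].
by rewrite /= nth_rcons size_bern_list lt_kn IH.
Qed.

Lemma bern0 : B 0 = 1. Proof. by []. Qed.

Lemma bernS m :
  B m.+1 = - (m.+2%:R)^-1 * \sum_(k < m.+1) 'C(m.+2, k)%:R * B k.
Proof.
rewrite /bern /= nth_rcons size_bern_list ltnn eqxx.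
by congr (_ * _); apply: eq_bigr => k _; rewrite nth_bern_list // -ltnS.
Qed.

Lemma bern1 : B 1 = - 2%:R^-1.
Proof. by rewrite bernS big_ord1 bern0 bin0 !mulr1. Qed.

Lemma sum_bern_lt n : \sum_(k < n) 'C(n, k)%:R * B k = (n == 1%N)%:R.
Proof.
case: n => [|[|m]]; first by rewrite big_ord0.
  by rewrite big_ord1 bin0 mul1r.
rewrite big_ord_recr /= bernS binSn mulrA mulrN mulfV ?pnatr_eq0 //.
by rewrite mulN1r addrN.
Qed.

Lemma sum_bern n : \sum_(k < n.+1) 'C(n, k)%:R * B k = B n + (n == 1%N)%:R.
Proof. by rewrite big_ord_recr /= sum_bern_lt binn mul1r addrC. Qed.

Lemma sum_binom_widen (F : nat -> R) m n : (m <= n)%N ->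
  \sum_(i < m.+1) 'C(m, i)%:R * F i = \sum_(i < n.+1) 'C(m, i)%:R * F i.
Proof.
move=> le_mn; rewrite (big_ord_widen n.+1 (fun i => 'C(m, i)%:R * F i)) ?ltnS //.
rewrite big_mkcond; apply: eq_bigr => i _.
by case: ifP => // /negbT; rewrite -leqNgt => /bin_small ->; rewrite mul0r.
Qed.

Lemma bernpolyD1 n (x : R) : bernpoly n (x + 1) = bernpoly n x + n%:R * x ^+ n.-1.
Proof.
transitivity (\sum_(i < n.+1)
    'C(n, i)%:R * x ^+ i * (B (n - i) + (n - i == 1)%N%:R)).
  transitivity (\sum_(k < n.+1) \sum_(i < n.+1)
      'C(n, k)%:R * 'C(n - k, i)%:R * B k * x ^+ i).
    apply: eq_bigr => k _; rewrite exprD1n mulr_sumr.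
    under eq_bigr => i _ do rewrite -[x ^+ i *+ _]mulr_natl mulrCA.
    rewrite (sum_binom_widen (fun i => 'C(n, k)%:R * B k * x ^+ i) _ _ (leq_subr k n)).
    by apply: eq_bigr => i _; ring.
  rewrite exchange_big; apply: eq_bigr => i _ /=.
  rewrite -sum_bern (sum_binom_widen B _ _ (leq_subr i n)) mulr_sumr.
  apply: eq_bigr => k _.
  have := congr1 (GRing.natmul (1 : R)) (bin_mul_sub n k i).
  rewrite !natrM => binC.
  transitivity ('C(n, k)%:R * 'C(n - k, i)%:R * B k * x ^+ i); first by [].
  by rewrite binC; ring.
rewrite (reindex_inj rev_ord_inj) /=.
transitivity (\sum_(j < n.+1) ('C(n, j)%:R * B j * x ^+ (n - j)
    + 'C(n, j)%:R * (j == 1%N :> nat)%:R * x ^+ (n - j))).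
  apply: eq_bigr => j _; have le_jn : (j <= n)%N by rewrite -ltnS.
  by rewrite subKn // bin_sub //; ring.
rewrite big_split /=; congr (_ + _).
case: n => [|m]; first by rewrite big_ord1 mulr0 !mul0r.
rewrite big_ord_recl big_ord_recl big1 => [|j _]; last by rewrite mulr0 mul0r.
by rewrite /= mulr0 !mul0r bin1 mulr1 subSS subn0 add0r addr0.
Qed.

Lemma bernpoly0 n : bernpoly n 0 = B n.
Proof.
rewrite /bernpoly big_ord_recr /= subnn expr0 binn mulr1 mul1r big1 ?add0r //.
by move=> k _; rewrite expr0n subn_eq0 leqNgt ltn_ord mulr0.
Qed.

Lemma signr_subn n k : (k <= n)%N -> (-1) ^+ (n - k) = (-1) ^+ n * (-1) ^+ k :> R.
Proof. by move=> le_kn; rewrite -signr_odd oddB // signr_addb !signr_odd. Qed.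

Lemma sum_bern_alt_lt n : \sum_(k < n) 'C(n, k)%:R * ((-1) ^+ k * B k) = n%:R.
Proof.
case: n => [|m]; first by rewrite big_ord0.
have := bernpolyD1 m.+1 (-1); rewrite addNr bernpoly0 /bernpoly.
rewrite big_ord_recr /= subnn expr0 binn mul1r mulr1.
set S := \sum_(k < m.+1) 'C(m.+1, k)%:R * ((-1) ^+ k * B k).
have -> : \sum_(k < m.+1) 'C(m.+1, k)%:R * B k * (-1) ^+ (m.+1 - k)
          = - (-1) ^+ m * S.
  rewrite /S mulr_sumr; apply: eq_bigr => k _.
  by rewrite signr_subn 1?ltnW // exprS; ring.
move=> shift; have : (-1) ^+ m * (m.+1%:R - S) = 0.
  by apply: (addIr (B m.+1)); rewrite add0r {2}shift; ring.
by move/eqP; rewrite mulf_eq0 signr_eq0 subr_eq0 => /eqP.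
Qed.

Lemma binomial_transform_eq0 (c : nat -> R) :
  (forall n, \sum_(k < n) 'C(n, k)%:R * c k = 0) -> forall n, c n = 0.
Proof.
move=> c_sum; elim/ltn_ind => n IH.
have := c_sum n.+1; rewrite big_ord_recr big1 => [|k _]; last first.
  by rewrite IH ?mulr0 //=; apply: ltn_ord.
by rewrite /= binSn add0r => /eqP; rewrite mulf_eq0 pnatr_eq0 => /eqP.
Qed.

Lemma sum_binom_eq1 n :
  \sum_(k < n) 'C(n, k)%:R * (k == 1%N :> nat)%:R = n%:R - (n == 1%N)%:R :> R.
Proof.
case: n => [|[|m]]; first by rewrite big_ord0 subr0.
  by rewrite big_ord1 mulr0 subrr.
rewrite big_ord_recl big_ord_recl big1 => [|k _]; last by rewrite mulr0.
by rewrite /= mulr0 mulr1 bin1 add0r !addr0 subr0.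
Qed.

Lemma bern_sign n : (-1) ^+ n * B n = B n + (n == 1%N)%:R.
Proof.
apply/eqP; rewrite -subr_eq0; apply/eqP; move: n.
apply: binomial_transform_eq0 => n.
under eq_bigr do rewrite mulrBr mulrDr.
by rewrite sumrB big_split /= sum_bern_alt_lt sum_bern_lt sum_binom_eq1; ring.
Qed.

End Bernoulli.

Section Zeta.
Variable R : numFieldType.
Local Notation B := (@bern R).

Lemma poch_neg k q : (q <= k)%N ->
  poch (- k%:R) q = (-1) ^+ q * (k ^_ q)%:R :> R.
Proof.
elim: q => [|q IH] le_qk; first by rewrite /poch big_ord0 expr0 mulr1.
rewrite /poch big_ord_recr /= -/(poch _ _) IH 1?ltnW //.
by rewrite ffactnSr natrM natrB 1?ltnW // exprS; ring.
Qed.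

Definition zeta_coef (k q : nat) : R := poch (- k%:R) q * B q.+1 / (q.+1)`!%:R.

(* The recursion defining [zetaR] at depth >= 2, as a linear functional of the
   values [h m] of depth one less whose new last index is [m]. *)
Definition zeta_step (k a : nat) (h : nat -> R) : R :=
  - (k.+1%:R)^-1 * h (a + k).+1 - 2%:R^-1 * h (a + k)%N
  + \sum_(1 <= q < k.+1) zeta_coef k q * h (a + k - q)%N.

Lemma zetaR_step n k a rest z :
  zetaR n.+1 (k :: a :: rest) z = zeta_step k a (fun m => zetaR n (m :: rest) z).
Proof. by []. Qed.

Lemma zeta_stepB k a h1 h2 :
  zeta_step k a h1 - zeta_step k a h2 = zeta_step k a (fun m => h1 m - h2 m).
Proof.
rewrite /zeta_step; under [in RHS]eq_bigr do rewrite mulrBr.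
by rewrite sumrB; ring.
Qed.

Lemma zeta_stepZ k a c h :
  zeta_step k a (fun m => c * h m) = c * zeta_step k a h.
Proof.
rewrite /zeta_step; under eq_bigr do rewrite mulrCA.
by rewrite -mulr_sumr; ring.
Qed.

Lemma eq_zeta_step k a h1 h2 : h1 =1 h2 -> zeta_step k a h1 = zeta_step k a h2.
Proof.
by move=> eq_h; rewrite /zeta_step; under eq_bigr do rewrite eq_h; rewrite !eq_h.
Qed.

Lemma zeta_coefE k q : (0 < q <= k)%N ->
  zeta_coef k q = - ('C(k.+1, q.+1)%:R / k.+1%:R * B q.+1).
Proof.
case/andP=> q_gt0 le_qk.
have sign : (-1) ^+ q * B q.+1 = - B q.+1.
  have := bern_sign R q.+1; rewrite eqSS (negbTE (lt0n_neq0 q_gt0)).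
  by rewrite mulr0n addr0 exprS mulN1r mulNr => {2}<-; rewrite opprK.
have ffactE : (k ^_ q)%:R = 'C(k.+1, q.+1)%:R * (q.+1)`!%:R / k.+1%:R :> R.
  by rewrite -natrM bin_ffact ffactSS natrM mulrC mulKf ?pnatr_eq0.
transitivity ((-1) ^+ q * B q.+1 * (k ^_ q)%:R / (q.+1)`!%:R).
  by rewrite /zeta_coef poch_neg //; ring.
rewrite sign ffactE; field.
by rewrite -mulrS !pnatr_eq0 -!lt0n fact_gt0.
Qed.

Lemma zeta_step_pow k a (x : R) :
  zeta_step k a (fun m => x ^+ m) = - (x ^+ a * (bernpoly k.+1 (x + 1) / k.+1%:R)).
Proof.
rewrite bernpolyD1 /bernpoly big_ord_recl big_ord_recl.
under eq_bigr => i _ do rewrite !lift0 subSS.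
rewrite !lift0 /= bin0 bern0 bin1 bern1 subn0 subSS subn0.
rewrite /zeta_step big_add1 big_mkord /=.
set T := \sum_(i < k) _ * x ^+ (k - i.+1).
have -> : \sum_(i < k) zeta_coef k i.+1 * x ^+ (a + k - i.+1)
          = - (x ^+ a / k.+1%:R * T).
  rewrite /T mulr_sumr -sumrN; apply: eq_bigr => i _.
  have lt_ik : (i < k)%N := ltn_ord i.
  by rewrite zeta_coefE // -addnBA // exprD; ring.
by rewrite -addnS !exprD; field; rewrite -mulrS pnatr_eq0.
Qed.

Lemma zetaR1_shift k (x : R) :
  zetaR 1 [:: k] (x + 1) - zetaR 1 [:: k] x = - x ^+ k.
Proof. by rewrite /= bernpolyD1; field; rewrite -mulrS pnatr_eq0. Qed.

(* [zetaR] reads the tuple reversed, so the first index [a] sits at the end,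
   where the recursion reaches it only at depth 2. *)
Lemma zetaR_shift n rs a (x : R) : size rs = n ->
  zetaR n.+1 (rcons rs a) (x + 1) - zetaR n.+1 (rcons rs a) x
  = - x ^+ a * zetaR n rs (x + 1).
Proof.
elim: n rs => [|n IH] [|k [|k' rest]] //.
- by rewrite zetaR1_shift mulr1.
- case=> <-; rewrite !(zetaR_step 1 k a [::]) zeta_stepB.
  rewrite (@eq_zeta_step _ _ _ (fun m => -1 * x ^+ m)) => [|m]; last first.
    by rewrite zetaR1_shift mulN1r.
  by rewrite zeta_stepZ zeta_step_pow /=; ring.
- case=> size_rest; rewrite !rcons_cons !(zetaR_step n.+1 k k') zeta_stepB.
  rewrite zetaR_step -zeta_stepZ.
  by apply: eq_zeta_step => m; rewrite -rcons_cons IH.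
Qed.

Lemma zeta_shift a w (x : R) :
  zeta (a :: w) (x + 1) - zeta (a :: w) x = - x ^+ a * zeta w (x + 1).
Proof. by rewrite /zeta rev_cons zetaR_shift ?size_rev. Qed.

Lemma ncmul_Ylin (c : nat -> R) (G : ncseries R) w :
  ncmul (Ylin c) G w = if w is a :: w' then c a * G w' else 0.
Proof.
rewrite /ncmul; case: w => [|a w]; first by rewrite big_ord1 mul0r.
rewrite big_ord_recl mul0r add0r big_ord_recl /= take0 drop0.
case: w => [|b w]; first by rewrite big_ord0 addr0.
by rewrite big1 ?addr0 // => i _; rewrite mul0r.
Qed.

Lemma HB_shift (x : R) w :
  HB (x + 1) w - HB x w = - ncmul (Ylin (fun k => x ^+ k)) (HB (x + 1)) w.
Proof.
rewrite ncmul_Ylin /HB; case: w => [|a w]; first by rewrite subrr oppr0.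
by rewrite zeta_shift mulNr.
Qed.

End Zeta.

Theorem theoremC (R : numFieldType) (z : R) :
  (forall w : seq nat,
     Dminus (@HB R) z w = - ncmul (Ylin (fun k => (z - 1) ^+ k)) (HB z) w)
  /\
  (forall w : seq nat,
     HB (z + 1) w - HB z w = - ncmul (Ylin (fun k => z ^+ k)) (HB (z + 1)) w).
Proof.
split=> w; last exact: HB_shift.
by have := HB_shift _ (z - 1) w; rewrite subrK.
Qed.
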